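(* Let $G$ be a finite group, let $A$ be a subgroup of $G$, and let $W$ be a subgroup of a finitely generated group $F$ such that the subgroup $WF'$ has infinite index in $F$. Then the order $|N(A)|$ of the normaliser of $A$ in $G$ divides each of the following numbers: a) the number of homomorphisms $\varphi: F\to G$ such that the restriction of $\varphi$ to $W$ is injective and $\varphi(W)\subseteq A$; b) the number of homomorphisms $\varphi: F\to G$ such that the restriction of $\varphi$ to $W$ is injective and $\varphi(W)=A$.
   Context: $F'$ denotes the commutator subgroup of $F$; $N(A)$ is the normaliser of $A$ in $G$. *)

From mathcomp Require Import all_boot all_fingroup.
From Stdlib Require List. Import List.ListNotations.
Set Implicit Arguments. Unset Strict Implicit. Unset Printing Implicit Defensive.

Record Grp := {
  gcar :> Type;
  gmul : gcar -> gcar -> gcar;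
  gone : gcar;
  ginv : gcar -> gcar;
  gmulA : forall x y z, gmul x (gmul y z) = gmul (gmul x y) z;
  gmul1 : forall x, gmul gone x = x;
  gmulV : forall x, gmul (ginv x) x = gone;
  gmulr1 : forall x, gmul x gone = x;
  gmulrV : forall x, gmul x (ginv x) = gone
}.

Section GrpDefs.
Variable F : Grp.

Definition is_subgroup (H : F -> Prop) : Prop :=
  [/\ H (gone F),
      (forall x y, H x -> H y -> H (gmul x y)) &
      (forall x, H x -> H (ginv x))].

Definition generated (S : F -> Prop) : F -> Prop :=
  fun x => forall H, is_subgroup H -> (forall s, S s -> H s) -> H x.

Definition fin_generated : Prop :=
  exists gens : list F, forall x, generated (fun s => List.In s gens) x.

Definition gcomm (x y : F) : F := gmul (gmul (ginv x) (ginv y)) (gmul x y).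

Definition derived : F -> Prop :=
  generated (fun c => exists x y, c = gcomm x y).

Definition prod_set (H K : F -> Prop) : F -> Prop :=
  fun x => exists h k, [/\ H h, K k & x = gmul h k].

Definition finite_index (H : F -> Prop) : Prop :=
  exists l : list F, forall x, exists2 g, List.In g l & H (gmul (ginv g) x).

End GrpDefs.

(* homomorphisms F -> G, viewed as maps into the ambient finGroupType *)
Definition is_hom (F : Grp) (gT : finGroupType) (G : {set gT}) (phi : F -> gT) : Prop :=
  (forall x, phi x \in G) /\ (forall x y, phi (gmul x y) = (phi x * phi y)%g).

Definition card_eq (X Y : Type) (P : (X -> Y) -> Prop) (n : nat) : Prop :=
  exists l : list (X -> Y), [/\ List.length l = n, List.NoDup l & forall f, P f <-> List.In f l].

From Pilot Require Import Defs.
From mathcomp Require Import all_boot all_fingroup.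
From Stdlib Require List. Import List.ListNotations.
From mathcomp Require Import ssralg ssrnum ssrint intdiv zify boolp.
From Stdlib Require Import ClassicalEpsilon.
Set Implicit Arguments. Unset Strict Implicit. Unset Printing Implicit Defensive.
Import GRing.Theory Num.Theory.

(* Put H = W F'.  As F is finitely generated and F/H is an infinite abelian group,
   there are a homomorphism t : F -> Z vanishing on W and an element u with t u = 1:
   adjoining the generators to H one at a time, each intermediate subgroup either
   contains H with finite index or maps nontrivially to Z killing H.  Then F is the
   semidirect product of K = ker t by <u>, so a homomorphism phi : F -> G is determined
   by its restriction to K and by phi u, and the homomorphisms agreeing with phi on K
   are those sending u into phi(u) C_G(phi(K)).  The conditions on phi only involve
   W <= K and are invariant under conjugation by N = N_G(A), so N permutes the classes
   of homomorphisms with a common restriction to K.  A class has |C_G(phi(K))|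
   elements and its stabiliser in N centralises phi(K), hence every N-orbit of
   classes contains a multiple of |N| homomorphisms. *)

Local Notation "x ** y" := (gmul x y) (at level 40, left associativity).

Section GrpTheory.
Variable F : Grp.
Implicit Types (x y : F) (z w : int).
Local Open Scope ring_scope.

Lemma gmulKg x y : ginv x ** (x ** y) = y.
Proof. by rewrite gmulA gmulV gmul1. Qed.

Lemma gmulgK x y : y ** x ** ginv x = y.
Proof. by rewrite -gmulA gmulrV gmulr1. Qed.

Lemma gmulgKV x y : y ** ginv x ** x = y.
Proof. by rewrite -gmulA gmulV gmulr1. Qed.

Lemma gmulIg x y y' : y ** x = y' ** x -> y = y'.
Proof. by move=> e; rewrite -(gmulgK x y) e gmulgK. Qed.

Lemma ginvK x : ginv (ginv x) = x.
Proof. by apply: (@gmulIg (ginv x)); rewrite gmulV gmulrV. Qed.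

Lemma ginvM x y : ginv (x ** y) = ginv y ** ginv x.
Proof. by apply: (@gmulIg (x ** y)); rewrite gmulV gmulA gmulgKV gmulV. Qed.

Lemma ginv1 : ginv (gone F) = gone F.
Proof. by rewrite -{2}(gmulV (gone F)) gmulr1. Qed.

Fixpoint gpow x (n : nat) : F :=
  if n is n'.+1 then x ** gpow x n' else gone F.

Definition zpow x (z : int) : F :=
  match z with Posz n => gpow x n | Negz n => gpow (ginv x) n.+1 end.

Lemma gpowSr x n : gpow x n.+1 = gpow x n ** x.
Proof. by elim: n => [|n IH] /=; rewrite ?gmul1 ?gmulr1 // -gmulA -IH. Qed.

Lemma zpow0 x : zpow x 0 = gone F. Proof. by []. Qed.

Lemma zpow1 x : zpow x 1 = x. Proof. exact: gmulr1. Qed.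

Lemma zpowS x z : zpow x (z + 1) = zpow x z ** x.
Proof.
case: z => [n|[|n]] /=; first by rewrite addn1 gpowSr.
  by rewrite gmulr1 gmulV.
have e := gpowSr (ginv x) n; rewrite /= in e.
by rewrite subn1 /= -gmulA [in RHS]e gmulgKV.
Qed.

Lemma zpowD x z w : zpow x (z + w) = zpow x z ** zpow x w.
Proof.
suff zpowSN z' : zpow x (z' - 1) = zpow x z' ** ginv x.
  elim/int_rect: w => [|n IH|n IH]; first by rewrite addr0 gmulr1.
    by rewrite -addn1 PoszD addrA !zpowS IH gmulA.
  by rewrite -addn1 PoszD opprD addrA !zpowSN IH gmulA.
by rewrite -{2}[z'](subrK 1) zpowS gmulgK.
Qed.

Lemma zpowN x z : zpow x (- z) = ginv (zpow x z).
Proof.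
apply: (@gmulIg (zpow x z)).
by rewrite -zpowD addNr gmulV.
Qed.

Lemma zpowMn x z (n : nat) : zpow x (z * n%:Z) = zpow (zpow x z) n.
Proof.
elim: n => [|n IH]; first by rewrite mulr0.
by rewrite -addn1 PoszD mulrDr mulr1 zpowS -IH zpowD.
Qed.

Lemma zpowM x z w : zpow x (z * w) = zpow (zpow x z) w.
Proof.
case: w => n; first exact: zpowMn.
by rewrite NegzE mulrN !zpowN zpowMn.
Qed.

End GrpTheory.

Section Subgroups.
Variable F : Grp.
Implicit Types (S H : F -> Prop) (x y g : F).

Lemma subgroup1 H : is_subgroup H -> H (gone F).
Proof. by case. Qed.

Lemma subgroupM H x y : is_subgroup H -> H x -> H y -> H (x ** y).
Proof. by case=> _ + _; apply. Qed.

Lemma subgroupV H x : is_subgroup H -> H x -> H (ginv x).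
Proof. by case=> _ _; apply. Qed.

Lemma subgroup_zpow H x z : is_subgroup H -> H x -> H (zpow x z).
Proof.
move=> sH Hx; have gpowH y n : H y -> H (gpow y n).
  by move=> Hy; elim: n => [|n IH] /=; [apply: subgroup1 | apply: subgroupM].
by case: z => n; apply: gpowH => //; apply: subgroupV.
Qed.

Lemma is_subgroup_generated S : is_subgroup (Defs.generated S).
Proof.
split=> [H sH _ | x y Sx Sy H sH SH | x Sx H sH SH].
- exact: subgroup1.
- by apply: subgroupM => //; [apply: Sx | apply: Sy].
- by apply: subgroupV => //; apply: Sx.
Qed.

Lemma mem_generated S x : S x -> Defs.generated S x.
Proof. by move=> Sx H _; apply. Qed.

Lemma generated_min S H x :
  is_subgroup H -> (forall s, S s -> H s) -> Defs.generated S x -> H x.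
Proof. by move=> sH SH; apply. Qed.

Lemma gconj_gcomm x g : ginv g ** x ** g = x ** gcomm x g.
Proof. by rewrite /gcomm !gmulA gmulrV gmul1. Qed.

Lemma subgroup_conj H x g :
  is_subgroup H -> (forall x y, H (gcomm x y)) -> H x -> H (ginv g ** x ** g).
Proof. by move=> sH cH Hx; rewrite gconj_gcomm; apply: subgroupM. Qed.

Lemma derived_gcomm x y : @derived F (gcomm x y).
Proof. by apply: mem_generated; exists x, y. Qed.

Lemma is_subgroup_prod_derived W : is_subgroup W -> is_subgroup (prod_set W (@derived F)).
Proof.
move=> sW; have sD : is_subgroup (@derived F) := is_subgroup_generated _.
have nD := subgroup_conj _ sD derived_gcomm.
split.
- by exists (gone F), (gone F); rewrite gmulr1; split=> //; apply: subgroup1.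
- move=> _ _ [w1 [d1 [Ww1 Dd1 ->]]] [w2 [d2 [Ww2 Dd2 ->]]].
  exists (w1 ** w2), (ginv w2 ** d1 ** w2 ** d2); split.
  + exact: subgroupM.
  + by apply: (subgroupM sD) => //; apply: nD.
  + by rewrite !gmulA gmulgK.
- move=> _ [w [d [Ww Dd ->]]].
  exists (ginv w), (w ** ginv d ** ginv w); split.
  + exact: subgroupV.
  + by rewrite -{1}(ginvK w); apply: nD; apply: (subgroupV sD).
  + by rewrite ginvM !gmulA gmulV gmul1.
Qed.

Lemma prod_derived_gcomm W x y : is_subgroup W -> prod_set W (@derived F) (gcomm x y).
Proof.
move=> sW; exists (gone F), (gcomm x y); rewrite gmul1; split=> //.
- exact: subgroup1.
- exact: derived_gcomm.
Qed.

End Subgroups.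

Definition morph_on (F E : Grp) (S : F -> Prop) (f : F -> E) :=
  forall x y, S x -> S y -> f (x ** y) = f x ** f y.

Section Morphisms.
Variables (F E : Grp) (S : F -> Prop) (f : F -> E).
Hypotheses (sS : is_subgroup S) (fM : morph_on S f).

Lemma morph1 : f (gone F) = gone E.
Proof.
have := fM (subgroup1 sS) (subgroup1 sS).
by rewrite gmul1 -{1}(gmul1 (f _)) => /gmulIg <-.
Qed.

Lemma morphV x : S x -> f (ginv x) = ginv (f x).
Proof.
move=> Sx; apply: (@gmulIg _ (f x)).
by rewrite -fM ?gmulV ?morph1 //; apply: subgroupV.
Qed.

Lemma morph_zpow x z : S x -> f (zpow x z) = zpow (f x) z.
Proof.
move=> Sx; have morph_gpow y n : S y -> f (gpow y n) = gpow (f y) n.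
  move=> Sy; elim: n => [|n IH] /=; first exact: morph1.
  by rewrite fM ?IH //; apply: (subgroup_zpow (Posz n)).
case: z => n; first exact: morph_gpow.
change (f (gpow (ginv x) n.+1) = gpow (ginv (f x)) n.+1).
by rewrite morph_gpow ?morphV //; apply: subgroupV.
Qed.

End Morphisms.

Definition int_grp : Grp :=
  Build_Grp (@addrA int) (@add0r int) (@addNr int)
    (@addr0 int) (@subrr int).

Lemma zpow_int (a z : int) : @zpow int_grp a z = (z * a)%R.
Proof.
have gpow_int (b : int) n : @gpow int_grp b n = (b *+ n)%R.
  by elim: n => [|n IH] //=; rewrite IH mulrS.
case: z => n; rewrite /zpow; rewrite gpow_int /=; lia.
Qed.

Definition fin_grp (gT : finGroupType) : Grp :=
  Build_Grp (@mulgA gT) (@mul1g gT) (@mulVg gT) (@mulg1 gT) (@mulgV gT).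

Lemma fin_grp_mul (gT : finGroupType) (g h : gT) : @gmul (fin_grp gT) g h = (g * h)%g.
Proof. by []. Qed.

Lemma fin_grp_inv (gT : finGroupType) (g : gT) : @ginv (fin_grp gT) g = (g^-1)%g.
Proof. by []. Qed.

Lemma is_subgroup_group (gT : finGroupType) (G : {group gT}) :
  is_subgroup (fun g : fin_grp gT => g \in G).
Proof. by split=> [|x y|x]; [apply: group1 | apply: groupM | rewrite /= groupV]. Qed.

Section InfiniteIndexQuotient.
Variables (F : Grp) (H : F -> Prop).
Hypotheses (sH : is_subgroup H) (cH : forall x y, H (gcomm x y)).
Local Open Scope ring_scope.

Definition finite_index_in (S : F -> Prop) :=
  exists l : list F, forall x, S x -> exists2 g, List.In g l & H (ginv g ** x).

Definition has_Z_quotient (S : F -> Prop) :=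
  exists t : F -> int, [/\ @morph_on F int_grp S t, forall h, H h -> t h = 0
                        & exists2 v, S v & t v != 0].

Section Adjoin.
Variables (S' : F -> Prop) (a : F).
Hypotheses (sS' : is_subgroup S') (HS' : forall h, H h -> S' h).
Let S := Defs.generated (fun y => S' y \/ y = a).

Let cS' x y : S' (gcomm x y). Proof. exact: HS'. Qed.

Lemma adjoin_mul s s' z w : s ** zpow a z ** (s' ** zpow a w) =
  s ** (s' ** gcomm s' (zpow a (- z))) ** zpow a (z + w).
Proof. by rewrite -gconj_gcomm zpowN ginvK zpowD !gmulA gmulgKV. Qed.

Lemma adjoin_decomp x : S x -> exists s z, S' s /\ x = s ** zpow a z.
Proof.
apply: (generated_min (H := fun x => exists s z, S' s /\ x = s ** zpow a z))
  => [|y [S'y| ->]]; last first.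
- by exists (gone F), 1; rewrite gmul1 zpow1; split=> //; apply: subgroup1.
- by exists y, 0; rewrite gmulr1.
split.
- by exists (gone F), 0; rewrite gmulr1; split=> //; apply: subgroup1.
- move=> _ _ [s [z [S's ->]]] [s' [w [S's' ->]]].
  exists (s ** (s' ** gcomm s' (zpow a (- z)))), (z + w); split; last exact: adjoin_mul.
  by apply: (subgroupM sS') => //; apply: (subgroupM sS').
- move=> _ [s [z [S's ->]]].
  exists (ginv (zpow a z) ** ginv s ** zpow a z), (- z); split.
    by apply: subgroup_conj => //; apply: subgroupV.
  by rewrite zpowN ginvM gmulgK.
Qed.

Lemma adjoin_extend (f : F -> int) (m T : int) :
  @morph_on F int_grp S' f -> (forall h, H h -> f h = 0) ->
  (forall z, S' (zpow a z) -> m * f (zpow a z) = z * T) ->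
  exists t : F -> int, [/\ @morph_on F int_grp S t, forall h, H h -> t h = 0
                        & forall s z, S' s -> t (s ** zpow a z) = m * f s + z * T].
Proof.
move=> fM fH compat.
have fV s : S' s -> f (ginv s) = - f s by move=> S's; rewrite (morphV sS' fM).
have well_defined s s' z w : S' s -> S' s' -> s ** zpow a z = s' ** zpow a w ->
    m * f s + z * T = m * f s' + w * T.
  move=> S's S's' e.
  have e' : zpow a (z - w) = ginv s ** s'.
    by rewrite zpowD zpowN -(gmulKg s (zpow a z)) e -!gmulA gmulrV gmulr1.
  have := compat (z - w); rewrite e' fM ?fV //; last exact: subgroupV.
  by move=> /(_ (subgroupM sS' (subgroupV sS' S's) S's')) /=; lia.
pose decomp x (p : F * int) := S' p.1 /\ x = p.1 ** zpow a p.2.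
pose rep x := epsilon (inhabits (gone F, 0)) (decomp x).
pose t x := m * f (rep x).1 + (rep x).2 * T.
have tE s z : S' s -> t (s ** zpow a z) = m * f s + z * T.
  move=> S's; have [|S'p e] := epsilon_spec (inhabits (gone F, 0)) (decomp (s ** zpow a z)).
    by exists (s, z).
  by symmetry; apply: well_defined e.
exists t; split=> //.
- move=> _ _ /adjoin_decomp [s [z [S's ->]]] /adjoin_decomp [s' [w [S's' ->]]].
  rewrite adjoin_mul !tE //; last by apply: (subgroupM sS') => //; apply: (subgroupM sS').
  have S'c := cS' s' (zpow a (- z)).
  rewrite (fM _ _ S's (subgroupM sS' S's' S'c)) (fM _ _ S's' S'c) (fH _ (cH _ _)) /=.
  lia.
- by move=> h Hh; rewrite -[h]gmulr1 -(zpow0 a) tE ?fH //; [lia | apply: HS'].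
Qed.

Lemma adjoin_finite_index (m : nat) : (0 < m)%N -> S' (zpow a m) ->
  finite_index_in S' -> finite_index_in S.
Proof.
move=> m_gt0 S'am [l hl].
exists (List.flat_map (fun g => List.map (fun i : nat => g ** zpow a i) (List.seq 0 m)) l).
move=> _ /adjoin_decomp [s [z [S's ->]]].
have [r r_def] : exists r : nat, r%:Z = (z %% m)%Z.
  have : 0 <= (z %% m)%Z by apply: modz_ge0; lia.
  by exists `|(z %% m)%Z|%N; lia.
have S'aqm : S' (zpow a ((z %/ m)%Z * m)).
  by rewrite mulrC zpowM; apply: subgroup_zpow.
have [g lg Hg] := hl _ (subgroupM sS' S's S'aqm).
exists (g ** zpow a r).
  apply/List.in_flat_map; exists g; split=> //.
  apply/List.in_map_iff; exists r; split=> //; apply/List.in_seq.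
  have : (z %% m)%Z < m by apply: ltz_pmod; lia.
  rewrite -r_def; lia.
rewrite gmulA in Hg; rewrite (divz_eq z m) -r_def zpowD ginvM !gmulA.
rewrite -(gmulA (ginv (zpow a r)) (ginv g)) -(gmulA (ginv (zpow a r))).
exact: subgroup_conj.
Qed.

Lemma adjoin_dichotomy :
  finite_index_in S' \/ has_Z_quotient S' -> finite_index_in S \/ has_Z_quotient S.
Proof.
have S'S s : S' s -> S s by move=> S's; apply: mem_generated; left.
case: (pselect (exists2 m : nat, (0 < m)%N & S' (zpow a m))) => [[m m_gt0 S'am]|no_pow].
  case=> [fin|[f [fM fH [v S'v fv]]]]; first by left; apply: (adjoin_finite_index m_gt0).
  have compat z : S' (zpow a z) -> m%:Z * f (zpow a z) = z * f (zpow a m).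
    move=> S'az; rewrite -zpow_int -(morph_zpow (E := int_grp) sS' fM _ S'az).
    by rewrite -zpowM mulrC zpowM (morph_zpow (E := int_grp) sS' fM _ S'am) zpow_int.
  have [t [tM tH tE]] := adjoin_extend fM fH compat.
  right; exists t; split=> //; exists v; first exact: S'S.
  by rewrite -[v]gmulr1 -(zpow0 a) tE // mul0r addr0 mulf_neq0 //; lia.
have no_zpow z : S' (zpow a z) -> z = 0.
  move=> S'az; apply/eqP/negPn/negP => z_neq0; apply: no_pow; exists `|z|%N; first lia.
  have [z_lt0|z_ge0] := ltrP z 0; last by rewrite (_ : _%:Z = z) //; lia.
  by rewrite (_ : _%:Z = - z) ?zpowN; [apply: subgroupV | lia].
have compat z : S' (zpow a z) -> 0 * (fun=> 0 : int) (zpow a z) = z * 1.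
  by move=> /no_zpow ->; rewrite !mul0r.
have zero_morph : @morph_on F int_grp S' (fun=> 0) by move=> * /=; rewrite addr0.
have [t [tM tH tE]] := adjoin_extend zero_morph (fun _ _ => erefl) compat.
right; exists t; split=> //; exists a; first by apply: mem_generated; right.
by have := tE (gone F) 1 (subgroup1 sS'); rewrite gmul1 zpow1 => ->; lia.
Qed.

End Adjoin.

Fixpoint adjoin_list (l : list F) : F -> Prop :=
  if l is a :: l' then Defs.generated (fun y => adjoin_list l' y \/ y = a) else H.

Lemma adjoin_list_subgroup l :
  is_subgroup (adjoin_list l) /\ forall h, H h -> adjoin_list l h.
Proof.
elim: l => [|a l [sS HS]] //=; split; first exact: is_subgroup_generated.
by move=> h /HS Sh; apply: mem_generated; left.
Qed.

Lemma adjoin_list_dichotomy l :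
  finite_index_in (adjoin_list l) \/ has_Z_quotient (adjoin_list l).
Proof.
elim: l => [|a l IH] /=.
  by left; exists [:: gone F] => x Hx; exists (gone F); [left | rewrite ginv1 gmul1].
by have [sS HS] := adjoin_list_subgroup l; apply: adjoin_dichotomy.
Qed.

Lemma adjoin_list_generated l x :
  Defs.generated (fun s => List.In s l) x -> adjoin_list l x.
Proof.
apply: (generated_min (H := adjoin_list l)); first by case: (adjoin_list_subgroup l).
elim: l => [|a l IH] //= s [<-|ls]; apply: mem_generated; [by right | left; exact: IH].
Qed.

Lemma fin_generated_dichotomy : fin_generated F ->
  finite_index_in (fun _ => True) \/ has_Z_quotient (fun _ => True).
Proof.
case=> gens gensF; have SF x := adjoin_list_generated (gensF x).
case: (adjoin_list_dichotomy gens) => [[l hl]|[t [tM tH [v _ tv]]]].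
  by left; exists l => x _; apply: hl.
by right; exists t; split=> //; [move=> x y _ _; apply: tM | exists v].
Qed.

End InfiniteIndexQuotient.

Section ZQuotientOnto.
Local Open Scope ring_scope.

Lemma Z_quotient_onto (F : Grp) (t : F -> int) (v : F) :
  @morph_on F int_grp (fun _ => True) t -> t v != 0 ->
  exists (t' : F -> int) (u : F), [/\ @morph_on F int_grp (fun _ => True) t',
                        forall x, t x = 0 -> t' x = 0 & t' u = 1].
Proof.
move=> tM tv; have sT : is_subgroup (fun _ : F => True) by split.
have tV x : t (ginv x) = - t x by rewrite (morphV sT tM).
pose P n := `[< (0 < n)%N /\ exists x, t x = n%:Z >].
have exP : exists n, P n.
  exists `|t v|%N; apply/asboolP; split; first lia.
  by have [tv_lt0|tv_ge0] := ltrP (t v) 0; [exists (ginv v); rewrite tV | exists v]; lia.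
have [d /asboolP [d_gt0 [u tu]] d_min] := ex_minnP exP.
have d_dvd x : (d %| t x)%Z.
  pose y := x ** zpow u (- (t x %/ d)%Z).
  have ty : t y = (t x %% d)%Z.
    by rewrite tM // (morph_zpow sT tM) // zpow_int tu {1}(divz_eq (t x) d) /=; lia.
  apply/dvdz_mod0P/eqP; apply: contraT => r_neq0.
  have /d_min : P `|(t x %% d)%Z|%N.
    by apply/asboolP; split; [lia | exists y; rewrite ty; apply/esym/gez0_abs/modz_ge0; lia].
  by have := ltz_pmod (t x) (d:=d); lia.
exists (fun x => (t x %/ d)%Z), u; split.
- by move=> x y _ _; rewrite /= tM // divzDl.
- by move=> x ->; rewrite div0z.
- by rewrite tu divzz; lia.
Qed.

End ZQuotientOnto.

Lemma exists_Z_quotient (F : Grp) (W : F -> Prop) :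
  is_subgroup W -> fin_generated F -> ~ finite_index (prod_set W (@derived F)) ->
  exists (t : F -> int) (u : F), [/\ @morph_on F int_grp (fun _ => True) t,
                                    forall w, W w -> t w = 0%R & t u = 1%R].
Proof.
move=> sW fgF infinite_index.
have sWD := is_subgroup_prod_derived sW.
have [[l hl]|[t [tM tH [v _ tv]]]] :=
  fin_generated_dichotomy sWD (fun x y => prod_derived_gcomm x y sW) fgF.
  by case: infinite_index; exists l => x; apply: hl.
have [t' [u [t'M t'0 t'u]]] := Z_quotient_onto tM tv.
exists t', u; split=> // w Ww; apply/t'0/tH; exists w, (gone F); rewrite gmulr1.
by split=> //; apply: subgroup1 (is_subgroup_generated _).
Qed.

Section StablePartition.
Local Open Scope group_scope.

Lemma dvdn_card_stable_partition (aT : finGroupType) (rT : finType)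
    (to : {action aT &-> rT}) (N : {group aT}) (P : {set {set rT}}) (D : {set rT}) :
  partition P D -> [acts N, on P | to^*] ->
  (forall B, B \in P -> #|'C_N[B | to^*]| %| #|B|) -> #|N| %| #|D|.
Proof.
move=> partP actsN stabB.
rewrite (card_partition partP) (partition_big_imset (orbit to^* N)) /=.
apply: dvdn_sum => _ /imsetP [B PB ->].
have -> : \sum_(C in P | orbit to^* N C == orbit to^* N B) #|C| =
          \sum_(C in orbit to^* N B) #|B|.
  apply: eq_big => C; last first.
    case/andP=> _ /eqP eqCB; have : C \in orbit to^* N B by rewrite -eqCB orbit_refl.
    by case/orbitP=> a _ <-; rewrite card_setact.
  apply/andP/idP => [[_ /eqP <-]|BC]; first exact: orbit_refl.
  have /orbit_eqP -> := BC; split=> //.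
  by case/orbitP: BC => a Na <-; rewrite (acts_act actsN).
rewrite sum_nat_const; have [k ->] := dvdnP (stabB B PB).
by rewrite mulnCA (card_orbit_in_stab _ _ (subsetT N)) dvdn_mull.
Qed.

End StablePartition.

Lemma In_mem (T : eqType) (x : T) (s : seq T) : List.In x s <-> x \in s.
Proof.
elim: s => [|y s IH] //=; rewrite in_cons; split.
  by case=> [->|/IH ->]; rewrite ?eqxx ?orbT.
by case/orP=> [/eqP ->|/IH]; [left | right].
Qed.

Lemma length_size (T : Type) (s : seq T) : List.length s = size s.
Proof. by elim: s => //= x s ->. Qed.

Lemma NoDup_map_in (A : eqType) (B : Type) (f : A -> B) (s : seq A) :
  uniq s -> {in s &, injective f} -> List.NoDup (List.map f s).
Proof.
elim: s => [|a s IH] /=; first by constructor.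
case/andP=> a_notin_s s_uniq f_inj; constructor.
  case/List.in_map_iff=> x [fx /In_mem xs]; move: a_notin_s.
  by rewrite -(f_inj x a) ?xs // in_cons ?xs ?eqxx ?orbT.
by apply: IH => // x y xs ys; apply: f_inj; rewrite in_cons ?xs ?ys orbT.
Qed.

Section Encoding.
Variables (A B : Type) (T : finType) (P : (A -> B) -> Prop) (code : (A -> B) -> T).
Variable f0 : A -> B.
Hypothesis code_inj : forall x y, P x -> P y -> code x = code y -> x = y.

Definition codes : {set T} := [set s | `[< exists x, P x /\ code x = s >]].

Definition decode (s : T) : A -> B := epsilon (inhabits f0) (fun x => P x /\ code x = s).

Lemma mem_codes x : P x -> code x \in codes.
Proof. by move=> Px; rewrite inE; apply/asboolP; exists x. Qed.

Lemma decodeP s : s \in codes -> P (decode s) /\ code (decode s) = s.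
Proof. by rewrite inE => /asboolP; apply: epsilon_spec. Qed.

Lemma codeK x : P x -> decode (code x) = x.
Proof.
by move=> Px; have [Pd cd] := decodeP (mem_codes Px); apply: code_inj.
Qed.

Lemma card_eq_codes : card_eq P #|codes|.
Proof.
exists (List.map decode (enum codes)); split.
- by rewrite List.length_map length_size cardE.
- apply: NoDup_map_in; first exact: enum_uniq.
  move=> s1 s2; rewrite !mem_enum => /decodeP[_ e1] /decodeP[_ e2] e.
  by rewrite -e1 -e2 e.
- move=> x; rewrite List.in_map_iff; split=> [Px|[s [<- /In_mem]]].
    by exists (code x); rewrite codeK // In_mem mem_enum mem_codes.
  by rewrite mem_enum => /decodeP[].
Qed.

End Encoding.

Section Extension.
Variables (gT : finGroupType) (G : {group gT}) (F : Grp) (t : F -> int) (u : F).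
Hypotheses (tM : @morph_on F int_grp (fun _ => True) t) (tu : t u = 1%R).
Local Notation zpowg g z := (@zpow (fin_grp gT) g z).
Local Open Scope group_scope.
Implicit Types (phi psi : F -> gT) (x k : F).

Let sT : is_subgroup (fun _ : F => True). Proof. by split. Qed.
Let tD x y : t (x ** y) = (t x + t y)%R. Proof. exact: tM. Qed.

Lemma hom_morph phi : is_hom G phi -> @morph_on F (fin_grp gT) (fun _ => True) phi.
Proof. by case=> _ phiM x y _ _; apply: phiM. Qed.

Lemma hom1 phi : is_hom G phi -> phi (gone F) = 1.
Proof. by move/hom_morph/(morph1 sT). Qed.

Lemma homV phi x : is_hom G phi -> phi (ginv x) = (phi x)^-1.
Proof. by move/hom_morph/(morphV sT); apply. Qed.

Lemma hom_zpow phi x z : is_hom G phi -> phi (zpow x z) = zpowg (phi x) z.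
Proof. by move/hom_morph/(morph_zpow sT); apply. Qed.

Lemma zpowg_in g z : g \in G -> zpowg g z \in G.
Proof. exact: (subgroup_zpow z (is_subgroup_group G)). Qed.

Lemma t_ginv x : t (ginv x) = (- t x)%R.
Proof. exact: (morphV sT tM). Qed.

Lemma t_zpow_u z : t (zpow u z) = z.
Proof. by rewrite (morph_zpow sT tM) // zpow_int tu mulr1. Qed.

Lemma t_conj x k : t k = 0%R -> t (x ** k ** ginv x) = 0%R.
Proof. by move=> tk; rewrite !tM // tk t_ginv /=; lia. Qed.

Definition kerpart x := x ** zpow u (- t x).

Lemma t_kerpart x : t (kerpart x) = 0%R.
Proof. by rewrite tM // t_zpow_u /=; lia. Qed.

Lemma kerpartK x : kerpart x ** zpow u (t x) = x.
Proof. by rewrite -gmulA -zpowD addNr gmulr1. Qed.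

Lemma kerpart_id x : t x = 0%R -> kerpart x = x.
Proof. by move=> tx; rewrite /kerpart tx gmulr1. Qed.

Definition extension psi g : F -> gT := fun x => psi (kerpart x) * zpowg g (t x).

Definition conj_compatible psi g :=
  forall k, t k = 0%R -> g * psi k * g^-1 = psi (u ** k ** ginv u).

Lemma conj_compatible_zpow psi g z k : is_hom G psi -> conj_compatible psi g ->
  t k = 0%R -> zpowg g z * psi k * (zpowg g z)^-1 = psi (zpow u z ** k ** ginv (zpow u z)).
Proof.
move=> psiG compat; suff pos (n : nat) k' : t k' = 0%R ->
    zpowg g n * psi k' * (zpowg g n)^-1 = psi (zpow u n ** k' ** ginv (zpow u n)).
  case: z => n; first exact: pos.
  move=> tk; rewrite NegzE !zpowN fin_grp_inv invgK ginvK.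
  have e (v : F) : v ** (ginv v ** k ** v) ** ginv v = k.
    by rewrite !gmulA gmulrV gmul1 gmulgK.
  have := pos n.+1 _ (t_conj (ginv (zpow u n.+1)) tk); rewrite ginvK e => <-.
  by move: (zpowg g n.+1) => X; rewrite !mulgA mulVg mul1g mulgKV.
elim: n k' => [|n IH] k' tk'; first by rewrite /= ginv1 gmul1 gmulr1 invg1 mulg1 mul1g.
rewrite -addn1 PoszD !zpowS fin_grp_mul invMg.
have -> : zpowg g n * g * psi k' * (g^-1 * (zpowg g n)^-1) =
          zpowg g n * (g * psi k' * g^-1) * (zpowg g n)^-1 by rewrite !mulgA.
by rewrite compat // IH ?t_conj // ginvM !gmulA.
Qed.

Lemma kerpartM x y :
  kerpart (x ** y) = kerpart x ** (zpow u (t x) ** kerpart y ** ginv (zpow u (t x))).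
Proof.
rewrite /kerpart tD -zpowN !gmulA -(gmulA x (zpow u _)) -zpowD addNr zpow0 gmulr1.
by rewrite -[RHS]gmulA -zpowD opprD addrC.
Qed.

Lemma extension_hom psi g : is_hom G psi -> g \in G -> conj_compatible psi g ->
  is_hom G (extension psi g).
Proof.
move=> psiG Gg compat; have [psi_in psiM] := psiG.
split=> [x|x y]; first by rewrite groupM ?zpowg_in.
rewrite /extension kerpartM psiM -(conj_compatible_zpow _ psiG compat (t_kerpart y)).
rewrite tD zpowD fin_grp_mul.
by move: (zpowg g (t x)) (zpowg g (t y)) => X Y; rewrite !mulgA mulgKV.
Qed.

Lemma extension_ker psi g x : t x = 0%R -> extension psi g x = psi x.
Proof. by move=> tx; rewrite /extension kerpart_id // tx mulg1. Qed.

Lemma extension_u psi g : is_hom G psi -> extension psi g u = g.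
Proof.
move=> psiG; rewrite /extension tu zpow1 /kerpart tu -[zpow u (- 1)]/(ginv u ** gone F).
by rewrite gmulr1 gmulrV (hom1 psiG) mul1g.
Qed.

Lemma hom_extension phi psi : is_hom G phi -> (forall k, t k = 0%R -> phi k = psi k) ->
  phi = extension psi (phi u).
Proof.
move=> phiG agree; apply: funext => x.
by rewrite /extension -agree ?t_kerpart // -hom_zpow // -(proj2 phiG) kerpartK.
Qed.

Definition ker_image psi : {set gT} := [set y | `[< exists2 k, t k = 0%R & psi k = y >]].

Lemma ker_imageP psi y : reflect (exists2 k, t k = 0%R & psi k = y) (y \in ker_image psi).
Proof. by rewrite inE; apply: asboolP. Qed.

Lemma cent_conj_compatible psi c : is_hom G psi -> c \in 'C(ker_image psi) ->
  conj_compatible psi (psi u * c).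
Proof.
move=> psiG /centP cent k tk; have [_ psiM] := psiG.
have /cent ck : psi k \in ker_image psi by apply/ker_imageP; exists k.
by rewrite !psiM (homV _ psiG) invMg !mulgA -(mulgA (psi u) c) ck !mulgA mulgK.
Qed.

Lemma agree_cent phi psi : is_hom G phi -> is_hom G psi ->
  (forall k, t k = 0%R -> psi k = phi k) -> (psi u)^-1 * phi u \in 'C_G(ker_image psi).
Proof.
move=> phiG psiG agree; have [phi_in phiM] := phiG; have [psi_in psiM] := psiG.
rewrite inE groupM ?groupV //=; apply/centP => _ /ker_imageP [k tk <-].
have := agree _ (t_conj u tk); rewrite !phiM !psiM !homV // (agree k tk) => e.
by apply: (mulgI (psi u)); rewrite !mulgA mulgV mul1g e mulgKV.
Qed.

Section Counting.
Variables (N : {group gT}) (gens : list F) (Q : (F -> gT) -> Prop).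
Hypotheses (sNG : N \subset G) (gensF : forall x, Defs.generated (fun s => List.In s gens) x).
Hypotheses (QG : forall phi, Q phi -> is_hom G phi)
  (QJ : forall phi a, Q phi -> a \in N -> Q (fun x => phi x ^ a))
  (Qker : forall phi psi, Q phi -> is_hom G psi ->
     (forall k, t k = 0%R -> phi k = psi k) -> Q psi).

Definition code phi : {ffun 'I_(List.length gens) -> gT} :=
  [ffun i : 'I__ => phi (List.nth i gens (gone F))].

Lemma code_inj phi psi : Q phi -> Q psi -> code phi = code psi -> phi = psi.
Proof.
move=> /QG phiG /QG psiG eq_code; apply: funext => x.
apply: (generated_min (H := fun x => phi x = psi x)) (gensF x).
  split=> [|y z ey ez|y ey]; first by rewrite !hom1.
    by rewrite (proj2 phiG) (proj2 psiG) ey ez.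
  by rewrite !homV // ey.
move=> s /(List.In_nth _ _ (gone F)) [i [/ltP lt_i <-]].
by have := congr1 (fun f : {ffun _ -> gT} => f (Ordinal lt_i)) eq_code; rewrite !ffunE.
Qed.

Local Notation homs := (codes Q code).
Local Notation dec := (decode Q code (fun=> 1)).

Lemma decK phi : Q phi -> dec (code phi) = phi.
Proof. exact: (codeK (fun=> 1) code_inj). Qed.

Definition conj_code (s : {ffun 'I_(List.length gens) -> gT}) a := [ffun i => s i ^ a].

Lemma conj_code1 s : conj_code s 1 = s.
Proof. by apply/ffunP => i; rewrite ffunE conjg1. Qed.

Lemma conj_codeM s : act_morph conj_code s.
Proof. by move=> a b; apply/ffunP => i; rewrite !ffunE conjgM. Qed.

Definition conj_code_action := TotalAction conj_code1 conj_codeM.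

Lemma code_conj phi a : code (fun x => phi x ^ a) = conj_code (code phi) a.
Proof. by apply/ffunP => i; rewrite !ffunE. Qed.

Lemma decode_conj s a : s \in homs -> a \in N ->
  conj_code s a \in homs /\ dec (conj_code s a) = (fun x => dec s x ^ a).
Proof.
move=> Ps Na; have [Qs cs] := decodeP (fun=> 1) Ps; have Qa := QJ Qs Na.
by rewrite -{1 2}cs -code_conj; split; [apply: mem_codes | apply: decK].
Qed.

Definition ker_agree : rel {ffun 'I_(List.length gens) -> gT} :=
  fun s s' => `[< forall k, t k = 0%R -> dec s k = dec s' k >].

Lemma ker_agreeP s s' : reflect (forall k, t k = 0%R -> dec s k = dec s' k) (ker_agree s s').
Proof. exact: asboolP. Qed.

Local Notation ker_class s := [set s' in homs | ker_agree s s'].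

Lemma ker_agree_equiv : {in homs & &, equivalence_rel ker_agree}.
Proof.
move=> s1 s2 s3 _ _ _; split; first exact/ker_agreeP.
move=> /ker_agreeP e12; apply/ker_agreeP/ker_agreeP => e k tk; first by rewrite -e12 ?e.
by rewrite e12 ?e.
Qed.

Lemma card_ker_class s : s \in homs -> #|ker_class s| = #|'C_G(ker_image (dec s))|.
Proof.
move=> /(decodeP (fun=> 1))[Qpsi _]; set psi := dec s; have psiG := QG Qpsi.
have ext_hom c : c \in 'C_G(ker_image psi) -> is_hom G (extension psi (psi u * c)).
  case/setIP=> Gc cc; apply: extension_hom; rewrite ?groupM ?(proj1 psiG) //.
  exact: cent_conj_compatible.
have Qext c : c \in 'C_G(ker_image psi) -> Q (extension psi (psi u * c)).
  by move=> Cc; apply: (Qker Qpsi (ext_hom c Cc)) => k tk; rewrite extension_ker.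
have -> : ker_class s = [set code (extension psi (psi u * c)) | c in 'C_G(ker_image psi)].
  apply/setP=> s'; apply/idP/imsetP => [|[c Cc ->]]; last first.
    rewrite in_set (mem_codes code (Qext c Cc)); apply/ker_agreeP => k tk.
    by rewrite decK ?extension_ker //; apply: Qext.
  rewrite in_set => /andP[Ps' /ker_agreeP agree].
  have [Qphi <-] := decodeP (fun=> 1) Ps'.
  exists ((psi u)^-1 * dec s' u); first exact: agree_cent (QG Qphi) psiG agree.
  by rewrite mulKVg -(hom_extension (QG Qphi) (fun k tk => esym (agree k tk))).
apply: card_in_imset => c1 c2 C1 C2 /(code_inj (Qext _ C1) (Qext _ C2)).
by move/(congr1 (fun f => f u)); rewrite !extension_u //; apply: mulgI.
Qed.

Lemma ker_class_conj s a : s \in homs -> a \in N ->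
  setact conj_code_action (ker_class s) a = ker_class (conj_code s a).
Proof.
move=> Ps Na; have [Psa dec_sa] := decode_conj Ps Na.
have Nai : a^-1 \in N by rewrite groupV.
apply/setP=> y; rewrite setactE; apply/imsetP/idP => [[x]|].
  rewrite in_set => /andP[Px /ker_agreeP agree] ->.
  have [Pxa dec_xa] := decode_conj Px Na.
  by rewrite in_set Pxa; apply/ker_agreeP => k tk; rewrite dec_sa dec_xa /= agree.
rewrite in_set => /andP[Py /ker_agreeP agree].
have [Pya dec_ya] := decode_conj Py Nai.
exists (conj_code y a^-1); last by rewrite -[conj_code]/(act conj_code_action) actKV.
rewrite in_set Pya; apply/ker_agreeP => k tk.
by rewrite dec_ya /= -agree // dec_sa /= conjgK.
Qed.

Lemma ker_class_stab s : s \in homs ->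
  'C_N[ker_class s | conj_code_action^*] \subset 'C_G(ker_image (dec s)).
Proof.
move=> Ps; apply/subsetP=> a /setIP[Na /astab1P fixed].
have Ga : a \in G := subsetP sNG a Na.
rewrite inE Ga; apply/centP => _ /ker_imageP[k tk <-].
have : conj_code s a \in ker_class s.
  by rewrite -fixed; apply/imsetP; exists s; rewrite // in_set Ps; apply/ker_agreeP.
rewrite in_set => /andP[_ /ker_agreeP/(_ k tk)].
rewrite (proj2 (decode_conj Ps Na)) /= => e.
by rewrite /commute {1}e conjgE !mulgA mulgV mul1g.
Qed.

Theorem dvdn_card_homs : exists n, card_eq Q n /\ #|N| %| n.
Proof.
exists #|homs|; split; first exact: card_eq_codes (fun=> 1) code_inj.
apply: (dvdn_card_stable_partition (equivalence_partitionP ker_agree_equiv)).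
  have conj_class b B : b \in N -> B \in equivalence_partition ker_agree homs ->
      conj_code_action^* B b \in equivalence_partition ker_agree homs.
    move=> Nb /imsetP[s Ps ->]; change (setact conj_code_action (ker_class s) b \in
      equivalence_partition ker_agree homs).
    rewrite ker_class_conj //; apply/imsetP; exists (conj_code s b) => //.
    exact: (proj1 (decode_conj Ps Nb)).
  apply/actsP => a Na B; apply/idP/idP => [|]; last exact: conj_class.
  by move/(conj_class a^-1); rewrite groupV actK; apply.
move=> _ /imsetP[s Ps ->]; rewrite card_ker_class //.
exact: cardSg (ker_class_stab Ps).
Qed.

End Counting.
End Extension.

Section ConditionsOnW.
Variables (gT : finGroupType) (A : {group gT}) (F : Grp) (W : F -> Prop).
Implicit Types (phi psi : F -> gT) (a : gT).
Local Open Scope group_scope.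

Definition inj_on phi := forall x y, W x -> W y -> phi x = phi y -> x = y.
Definition maps_into phi := forall w, W w -> phi w \in A.
Definition maps_onto phi := forall b, b \in A -> exists2 w, W w & phi w = b.

Lemma hom_conj (G : {group gT}) phi a : is_hom G phi -> a \in G ->
  is_hom G (fun x => phi x ^ a).
Proof. by case=> phi_in phiM Ga; split=> [x|x y]; rewrite ?groupJ ?phiM ?conjMg. Qed.

Lemma inj_on_conj phi a : inj_on phi -> inj_on (fun x => phi x ^ a).
Proof. by move=> inj x y Wx Wy /conjg_inj; apply: inj. Qed.

Lemma maps_into_conj phi a : a \in 'N(A) -> maps_into phi -> maps_into (fun x => phi x ^ a).
Proof. by move=> Na into w Ww; rewrite memJ_norm ?into. Qed.

Lemma maps_onto_conj phi a : a \in 'N(A) -> maps_onto phi -> maps_onto (fun x => phi x ^ a).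
Proof.
move=> Na onto b Ab; have [w Ww phiw] : exists2 w, W w & phi w = b ^ a^-1.
  by apply: onto; rewrite memJ_norm ?groupV.
by exists w; rewrite // phiw conjgKV.
Qed.

Section Agreement.
Variables phi psi : F -> gT.
Hypothesis agree : forall w, W w -> phi w = psi w.

Lemma inj_on_agree : inj_on phi -> inj_on psi.
Proof. by move=> inj x y Wx Wy; rewrite -!agree //; apply: inj. Qed.

Lemma maps_into_agree : maps_into phi -> maps_into psi.
Proof. by move=> into w Ww; rewrite -agree ?into. Qed.

Lemma maps_onto_agree : maps_onto phi -> maps_onto psi.
Proof. by move=> onto b /onto[w Ww <-]; exists w; rewrite ?agree. Qed.

End Agreement.
End ConditionsOnW.

Theorem mainTheorem7 (gT : finGroupType) (G A : {group gT}) (F : Grp) (W : F -> Prop) :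
  A \subset G ->
  is_subgroup W ->
  @fin_generated F ->
  ~ finite_index (prod_set W (@derived F)) ->
  (exists n, card_eq (fun phi : F -> gT =>
        [/\ is_hom G phi,
            (forall x y, W x -> W y -> phi x = phi y -> x = y) &
            (forall w, W w -> phi w \in A)]) n
      /\ (#|'N_G(A)%g| %| n)%N)
  /\
  (exists n, card_eq (fun phi : F -> gT =>
        [/\ is_hom G phi,
            (forall x y, W x -> W y -> phi x = phi y -> x = y),
            (forall w, W w -> phi w \in A) &
            (forall a, a \in A -> exists2 w, W w & phi w = a)]) n
      /\ (#|'N_G(A)%g| %| n)%N).
Proof.
move=> _ sW fgF infinite_index.
have [t [u [tM tW tu]]] := exists_Z_quotient sW fgF infinite_index.
have [gens gensF] := fgF.
have count := dvdn_card_homs tM tu (subsetIl G 'N(A)%g) gensF.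
have agreeW phi psi : (forall k, t k = 0%R -> phi k = psi k) ->
    forall w, W w -> phi w = psi w by move=> e w /tW /e.
split; apply: count => [phi | phi a + /setIP[Ga Na] | phi psi + psiG /agreeW e];
  try by case=> phiG.
- by case=> phiG inj into; split;
    [apply: hom_conj | apply: inj_on_conj | apply: maps_into_conj].
- by case=> phiG inj into; split; [| apply: (inj_on_agree e) | apply: (maps_into_agree e)].
- by case=> phiG inj into onto; split;
    [apply: hom_conj | apply: inj_on_conj | apply: maps_into_conj | apply: maps_onto_conj].
- by case=> phiG inj into onto; split;
    [| apply: (inj_on_agree e) | apply: (maps_into_agree e) | apply: (maps_onto_agree e)].
Qed.
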